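(* Assume $\rho$ satisfies the Loss Kernel Assumption, let $\zeta\ge\xi\ge0$, let $X^{(k)}\in\mathcal X$, let $G(\cdot\mid X^{(k)})$ be as defined below (with parameter $\xi$), and define $$H(X\mid X^{(k)})=\sum_{\alpha\in\mathcal A}\sum_{(i,j)\in\vec{\mathcal E}^{\alpha\alpha}}E^{\alpha\alpha}_{ij}(X\mid X^{(k)})+\sum_{\alpha\ne\beta}\sum_{(i,j)\in\vec{\mathcal E}^{\alpha\beta}}E^{\alpha\beta}_{ij}(X\mid X^{(k)})+\tfrac{\zeta}{2}\|X-X^{(k)}\|^2 .$$ Then there exist PSD matrices $\Pi^{\alpha(k)}_i\in\mathbb R^{(d+1)\times(d+1)}$ ($\alpha\in\mathcal A$, $1\le i\le n_\alpha$), with $\Pi^{\alpha(k)}=\mathrm{diag}(\Pi^{\alpha(k)}_1,\dots,\Pi^{\alpha(k)}_{n_\alpha})$ (acting so that $\|X^\alpha\|^2_{\Pi^{\alpha(k)}}=\sum_i\|X^\alpha_i\|^2_{\Pi^{\alpha(k)}_i}$) and $\Pi^{(k)}=\mathrm{diag}(\Pi^{1(k)},\dots,\Pi^{|\mathcal A|(k)})$, such that: (a) $H(X\mid X^{(k)})=\sum_\alpha H^\alpha(X^\alpha\mid X^{(k)})+F(X^{(k)})$ and $H^\alpha(X^\alpha\mid X^{(k)})=\sum_{i=1}^{n_\alpha}H^\alpha_i(X^\alpha_i\mid X^{(k)})$, where $H^\alpha(X^\alpha\mid X^{(k)})=\frac12\|X^\alpha-X^{\alpha(k)}\|^2_{\Pi^{\alpha(k)}}+\langle\nabla_{X^\alpha}F(X^{(k)}),X^\alpha-X^{\alpha(k)}\rangle$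 and $H^\alpha_i(X^\alpha_i\mid X^{(k)})=\frac12\|X^\alpha_i-X^{\alpha(k)}_i\|^2_{\Pi^{\alpha(k)}_i}+\langle\nabla_{X^\alpha_i}F(X^{(k)}),X^\alpha_i-X^{\alpha(k)}_i\rangle$; (b) $H(X\mid X^{(k)})=\frac12\|X-X^{(k)}\|^2_{\Pi^{(k)}}+\langle\nabla F(X^{(k)}),X-X^{(k)}\rangle+F(X^{(k)})$, and $H(X\mid X^{(k)})\ge G(X\mid X^{(k)})\ge F(X)$ for all $X$, with equalities if $X=X^{(k)}$; (c) $\Pi^{(k)}\succeq\Gamma^{(k)}\succeq M^{(k)}$, where $\Gamma^{(k)}=\mathrm{diag}(\Gamma^{1(k)},\dots,\Gamma^{|\mathcal A|(k)})$ is the block-diagonal matrix of the quadratic part of $G$ defined below; (d) there is a constant PSD matrix $\Pi$, independent of $X^{(k)}$, with $\Pi\succeq\Pi^{(k)}$ for every $X^{(k)}\in\mathcal X$; (e) $H^\alpha(X^\alpha\mid X^{(k)})\ge G^\alpha(X^\alpha\mid X^{(k)})$ for all $X^\alpha$, with equality if $X^\alpha=X^{\alpha(k)}$.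
   Context: Setup. Fix an integer $d\ge 2$, a finite set of nodes $\mathcal A=\{1,\dots,|\mathcal A|\}$, positive integers $n_\alpha$ ($\alpha\in\mathcal A$) and $n=\sum_{\alpha}n_\alpha$. An element $X\in\mathbb R^{d\times(d+1)n}$ is written $X=[X^1\ \cdots\ X^{|\mathcal A|}]$ with $X^\alpha=[t^\alpha\ R^\alpha]\in\mathbb R^{d\times(d+1)n_\alpha}$, where $t^\alpha=[t^\alpha_1\ \cdots\ t^\alpha_{n_\alpha}]$ with $t^\alpha_i\in\mathbb R^d$ and $R^\alpha=[R^\alpha_1\ \cdots\ R^\alpha_{n_\alpha}]$ with $R^\alpha_i\in\mathbb R^{d\times d}$; write $X^\alpha_i=[t^\alpha_i\ R^\alpha_i]\in\mathbb R^{d\times(d+1)}$. The feasible set is $\mathcal X=\{X:\ R^\alpha_i\in SO(d)\ \forall\alpha,i\}$; $X^{(k)}=[X^{1(k)}\ \cdots\ X^{|\mathcal A|(k)}]$. We use $\langle A,B\rangle=\mathrm{tr}(AB^\top)$, $\|\cdot\|$ the Frobenius norm, and for PSD $M$, $\|Y\|_M^2=\mathrm{tr}(YMY^\top)$. Data: for each ordered pair $(\alpha,\beta)\in\mathcal A\times\mathcal A$ (including $\alpha=\beta$) a finite set $\vec{\mathcal E}^{\alpha\beta}\subseteq\{1,\dots,n_\alpha\}\times\{1,\dots,n_\beta\}$, and for each $(i,j)\in\vec{\mathcal E}^{\alpha\beta}$ a rotation $\tilde R^{\alpha\beta}_{ij}\in SO(d)$, a vector $\tilde t^{\alpha\beta}_{ij}\in\mathbb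 R^d$ and weights $\kappa^{\alpha\beta}_{ij},\tau^{\alpha\beta}_{ij}\ge0$. For $(i,j)\in\vec{\mathcal E}^{\alpha\beta}$ define the quadratic form on $\mathbb R^{d\times(d+1)n}$ $$q^{\alpha\beta}_{ij}(X)=\kappa^{\alpha\beta}_{ij}\|R^\alpha_i\tilde R^{\alpha\beta}_{ij}-R^\beta_j\|^2+\tau^{\alpha\beta}_{ij}\|R^\alpha_i\tilde t^{\alpha\beta}_{ij}+t^\alpha_i-t^\beta_j\|^2 .$$ Loss Kernel Assumption: $\rho:\mathbb R^+\to\mathbb R$ ($\mathbb R^+=[0,\infty)$) satisfies (a) $\rho(s)\ge0$ with equality iff $s=0$; (b) $\rho$ is continuously differentiable on $\mathbb R^+$; (c) $\rho$ is concave; (d) $0\le\rho'(s)\le1$ for all $s\ge0$ and $\rho'(0)=1$; (e) $\varphi(X)=\rho(\|X\|^2)$ has Lipschitz continuous gradient on $\mathbb R^{m\times n}$. Define $F^{\alpha\alpha}_{ij}(X)=\frac12q^{\alpha\alpha}_{ij}(X)$ for $(i,j)\in\vec{\mathcal E}^{\alpha\alpha}$ and $F^{\alpha\beta}_{ij}(X)=\frac12\rho\big(q^{\alpha\beta}_{ij}(X)\big)$ for $\alpha\ne\beta$, $(i,j)\in\vec{\mathcal E}^{\alpha\beta}$ (defined on all of $\mathbb R^{d\times(d+1)n}$), and the objective $$F(X)=\sum_{\alpha\in\mathcal A}\sum_{(i,j)\in\vec{\mathcal E}^{\alpha\alpha}}F^{\alpha\alpha}_{ij}(X)+\sum_{\alpha\ne\beta}\sum_{(i,j)\in\vec{\mathcal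 E}^{\alpha\beta}}F^{\alpha\beta}_{ij}(X).$$ $\nabla$ denotes the Euclidean gradient and $\nabla_{X^\alpha}$, $\nabla_{X^\alpha_i}$ partial gradients. Weights: $\omega^{\alpha\beta(k)}_{ij}=1$ if $\alpha=\beta$ and $\omega^{\alpha\beta(k)}_{ij}=\rho'\big(q^{\alpha\beta}_{ij}(X^{(k)})\big)$ if $\alpha\neq\beta$. Decoupled quadratic form: for $(i,j)\in\vec{\mathcal E}^{\alpha\beta}$, $$p^{\alpha\beta}_{ij}(X)=2\Big(\kappa^{\alpha\beta}_{ij}\|R^\alpha_i\|^2+\kappa^{\alpha\beta}_{ij}\|R^\beta_j\|^2+\tau^{\alpha\beta}_{ij}\|R^\alpha_i\tilde t^{\alpha\beta}_{ij}+t^\alpha_i\|^2+\tau^{\alpha\beta}_{ij}\|t^\beta_j\|^2\Big),$$ and $E^{\alpha\beta}_{ij}(X\mid X^{(k)})=\tfrac12\omega^{\alpha\beta(k)}_{ij}\,p^{\alpha\beta}_{ij}(X-X^{(k)})+\langle\nabla F^{\alpha\beta}_{ij}(X^{(k)}),X-X^{(k)}\rangle+F^{\alpha\beta}_{ij}(X^{(k)})$ (for $\alpha=\beta$ as well). $G(X\mid X^{(k)})=\sum_{\alpha}\sum_{\vec{\mathcal E}^{\alpha\alpha}}F^{\alpha\alpha}_{ij}(X)+\sum_{\alpha\ne\beta}\sum_{\vec{\mathcal E}^{\alpha\beta}}E^{\alpha\beta}_{ij}(X\mid X^{(k)})+\frac\xi2\|X-X^{(k)}\|^2$; its quadratic part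 is block diagonal, i.e. $G(X\mid X^{(k)})=\sum_\alpha G^\alpha(X^\alpha\mid X^{(k)})+F(X^{(k)})$ with $G^\alpha(X^\alpha\mid X^{(k)})=\frac12\|X^\alpha-X^{\alpha(k)}\|^2_{\Gamma^{\alpha(k)}}+\langle\nabla_{X^\alpha}F(X^{(k)}),X^\alpha-X^{\alpha(k)}\rangle$ for PSD $\Gamma^{\alpha(k)}$. The PSD matrix $M^{(k)}$ is defined by $\|Y\|^2_{M^{(k)}}=\sum_{\alpha}\sum_{\vec{\mathcal E}^{\alpha\alpha}}q^{\alpha\alpha}_{ij}(Y)+\sum_{\alpha\ne\beta}\sum_{\vec{\mathcal E}^{\alpha\beta}}\omega^{\alpha\beta(k)}_{ij}q^{\alpha\beta}_{ij}(Y)$. *)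

From HB Require Import structures.
From mathcomp Require Import all_boot all_order all_algebra.
From mathcomp Require Import all_classical all_reals all_analysis.
Set Implicit Arguments. Unset Strict Implicit. Unset Printing Implicit Defensive.
Import Order.TTheory GRing.Theory Num.Theory.
Import numFieldNormedType.Exports.
Local Open Scope classical_set_scope.
Local Open Scope ring_scope.

Section Generic.
Variable R : realType.

Definition ipM (m k : nat) (A B : 'M[R]_(m, k)) : R :=
  \sum_(r < m) \sum_(c < k) A r c * B r c.
Definition fro2 (m k : nat) (A : 'M[R]_(m, k)) : R := ipM A A.

Definition wnormM (m k : nat) (Y : 'M[R]_(m, k)) (P : 'M[R]_k) : R :=
  \tr (Y *m P *m Y^T).

Definition qform (J : finType) (P : J -> J -> R) (z : J -> R) : R :=
  \sum_(u : J) \sum_(w : J) z u * P u w * z w.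
Definition psdf (J : finType) (P : J -> J -> R) : Prop :=
  (forall u w, P u w = P w u) /\ (forall z : J -> R, 0 <= qform P z).
Definition psdM (k : nat) (P : 'M[R]_k) : Prop := psdf (fun u w => P u w).

Definition SOmx (k : nat) (Q : 'M[R]_k) : Prop :=
  Q^T *m Q = 1%:M /\ \det Q = 1.

Definition gradM (m k : nat) (f : 'M[R]_(m, k) -> R) (X : 'M[R]_(m, k))
  : 'M[R]_(m, k) :=
  \matrix_(i, j) derive1 (fun t : R => f (X + t *: delta_mx i j)) 0.

(* Loss Kernel Assumption on rho : R^+ -> R  (rho is given as a map    *)
(* R -> R whose values on negative reals are irrelevant; drho is its   *)
(* derivative on R^+ = [0, oo), one-sided at 0)                        *)
Definition lk_pos (rho : R -> R) : Prop :=
  forall s, 0 <= s -> 0 <= rho s /\ (rho s = 0 <-> s = 0).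
Definition lk_C1 (rho drho : R -> R) : Prop :=
  (forall s, 0 <= s ->
     (fun h : R => h^-1 * (rho (s + h) - rho s))
       @ within [set h | 0 <= s + h] (0:R)^' --> drho s)
  /\ {within [set s | 0 <= s], continuous drho}.
Definition lk_concave (rho : R -> R) : Prop :=
  forall s1 s2 t, 0 <= s1 -> 0 <= s2 -> 0 <= t <= 1 ->
    t * rho s1 + (1 - t) * rho s2 <= rho (t * s1 + (1 - t) * s2).
Definition lk_slope (drho : R -> R) : Prop :=
  (forall s, 0 <= s -> 0 <= drho s <= 1) /\ drho 0 = 1.
Definition lk_lipgrad (rho : R -> R) : Prop :=
  forall m k : nat, exists L : R, forall X Y : 'M[R]_(m, k),
    Num.sqrt (fro2 (gradM (fun Z => rho (fro2 Z)) X
                    - gradM (fun Z => rho (fro2 Z)) Y))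
    <= L * Num.sqrt (fro2 (X - Y)).
Definition loss_kernel (rho drho : R -> R) : Prop :=
  [/\ lk_pos rho, lk_C1 rho drho, lk_concave rho, lk_slope drho
    & lk_lipgrad rho].
End Generic.

Definition node (A : nat) (n : 'I_A -> nat) : finType :=
  {a : 'I_A & 'I_(n a)}.

Section Problem.
Variables (R : realType) (d A : nat) (n : 'I_A -> nat).

(* the variable X in R^{d x (d+1) n}, stored blockwise:
   X v = X^alpha_i = [t^alpha_i R^alpha_i] in R^{d x (1+d)} for v = (alpha,i) *)
Definition state := node n -> 'M[R]_(d, 1 + d).
Definition nd (a : 'I_A) (i : 'I_(n a)) : node n := existT _ a i.
Definition tv (X : state) (a : 'I_A) (i : 'I_(n a)) : 'M[R]_(d, 1) :=
  lsubmx (X (nd i)).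
Definition Rv (X : state) (a : 'I_A) (i : 'I_(n a)) : 'M[R]_d :=
  rsubmx (X (nd i)).
Definition feasible (X : state) : Prop := forall a (i : 'I_(n a)), SOmx (Rv X i).

Definition blk (a : 'I_A) := 'I_(n a) -> 'M[R]_(d, 1 + d).
Definition blockof (X : state) (a : 'I_A) : blk a := fun i => X (nd i).
Arguments blockof X a : clear implicits.

Definition st_sub (X Y : state) : state := fun v => X v - Y v.
Definition ipS (X Y : state) : R := \sum_(v : node n) ipM (X v) (Y v).
Definition nrm2 (X : state) : R := ipS X X.
Definition blk_sub a (X Y : blk a) : blk a := fun i => X i - Y i.
Definition ipB a (X Y : blk a) : R := \sum_(i < n a) ipM (X i) (Y i).

(* Euclidean gradient of f : R^{d x (d+1)n} -> R (matrix of partial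
   derivatives); its blocks are the partial gradients
   nabla_{X^alpha_i} f = gradS f X (nd i),  nabla_{X^alpha} f = blockof (gradS f X) alpha *)
Definition e_st (v : node n) (r : 'I_d) (c : 'I_(1 + d)) : state :=
  fun w => if w == v then delta_mx r c else 0.
Definition gradS (f : state -> R) (X : state) : state :=
  fun v => \matrix_(r, c)
    derive1 (fun t : R => f (fun w => X w + t *: e_st v r c w)) 0.

(* matrices acting on the columns of X^alpha (indexed by (i, column)) and
   on the columns of X (indexed by (node, column)) *)
Definition colB (a : 'I_A) : finType := ('I_(n a) * 'I_(1 + d))%type.
Definition colG : finType := (node n * 'I_(1 + d))%type.
Definition wnB a (P : colB a -> colB a -> R) (Y : blk a) : R :=
  \sum_(r < d) qform P (fun u : colB a => Y u.1 r u.2).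
Definition wnG (P : colG -> colG -> R) (Y : state) : R :=
  \sum_(r < d) qform P (fun u : colG => Y u.1 r u.2).
(* z^T diag(Gamma^1,...,Gamma^|A|) z *)
Definition qdiagB (Gam : forall a : 'I_A, colB a -> colB a -> R)
  (z : colG -> R) : R :=
  \sum_(a < A) qform (Gam a) (fun u : colB a => z (nd u.1, u.2)).
(* z^T diag(Pi_v)_v z, i.e. with Pi^alpha = diag(Pi^alpha_1..Pi^alpha_{n_alpha}) *)
Definition qdiagN (Pi : node n -> 'M[R]_(1 + d)) (z : colG -> R) : R :=
  \sum_(v : node n) qform (fun c c' => Pi v c c') (fun c => z (v, c)).

Record pgo_data := PgoData {
  Edg : forall a b : 'I_A, {set 'I_(n a) * 'I_(n b)};
  Rt  : forall a b : 'I_A, 'I_(n a) -> 'I_(n b) -> 'M[R]_d;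
  tt  : forall a b : 'I_A, 'I_(n a) -> 'I_(n b) -> 'M[R]_(d, 1);
  kap : forall a b : 'I_A, 'I_(n a) -> 'I_(n b) -> R;
  tau : forall a b : 'I_A, 'I_(n a) -> 'I_(n b) -> R }.

Definition data_ok (D : pgo_data) : Prop :=
  forall a b (e : 'I_(n a) * 'I_(n b)), e \in Edg D a b ->
    [/\ SOmx (Rt D e.1 e.2), 0 <= kap D e.1 e.2 & 0 <= tau D e.1 e.2].

Variables (D : pgo_data) (rho drho : R -> R).

Definition qf a b (i : 'I_(n a)) (j : 'I_(n b)) (X : state) : R :=
  kap D i j * fro2 (Rv X i *m Rt D i j - Rv X j)
  + tau D i j * fro2 (Rv X i *m tt D i j + tv X i - tv X j).

Definition pf a b (i : 'I_(n a)) (j : 'I_(n b)) (X : state) : R :=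
  2 * (kap D i j * fro2 (Rv X i) + kap D i j * fro2 (Rv X j)
       + tau D i j * fro2 (Rv X i *m tt D i j + tv X i)
       + tau D i j * fro2 (tv X j)).

Definition Fe a b (i : 'I_(n a)) (j : 'I_(n b)) (X : state) : R :=
  if a == b then qf i j X / 2 else rho (qf i j X) / 2.

Definition omega a b (i : 'I_(n a)) (j : 'I_(n b)) (Xk : state) : R :=
  if a == b then 1 else drho (qf i j Xk).

Definition sum_aa (f : forall a : 'I_A, 'I_(n a) -> 'I_(n a) -> R) : R :=
  \sum_(a < A) \sum_(e in Edg D a a) f a e.1 e.2.
Definition sum_ab (f : forall a b : 'I_A, 'I_(n a) -> 'I_(n b) -> R) : R :=
  \sum_(a < A) \sum_(b < A | b != a) \sum_(e in Edg D a b) f a b e.1 e.2.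

Definition Fobj (X : state) : R :=
  sum_aa (fun a i j => Fe i j X) + sum_ab (fun a b i j => Fe i j X).

Definition Ee a b (i : 'I_(n a)) (j : 'I_(n b)) (X Xk : state) : R :=
  omega i j Xk / 2 * pf i j (st_sub X Xk)
  + ipS (gradS (Fe i j) Xk) (st_sub X Xk) + Fe i j Xk.

Definition Gfun (xi : R) (X Xk : state) : R :=
  sum_aa (fun a i j => Fe i j X) + sum_ab (fun a b i j => Ee i j X Xk)
  + xi / 2 * nrm2 (st_sub X Xk).

Definition Hfun (zeta : R) (X Xk : state) : R :=
  sum_aa (fun a i j => Ee i j X Xk) + sum_ab (fun a b i j => Ee i j X Xk)
  + zeta / 2 * nrm2 (st_sub X Xk).

Definition Mform (Xk Y : state) : R :=
  sum_aa (fun a i j => qf i j Y) + sum_ab (fun a b i j => omega i j Xk * qf i j Y).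

Definition Gblk a (Gam : colB a -> colB a -> R) (Y : blk a) (Xk : state) : R :=
  wnB Gam (blk_sub Y (blockof Xk a)) / 2
  + ipB (blockof (gradS Fobj Xk) a) (blk_sub Y (blockof Xk a)).

Definition Hnode a (i : 'I_(n a)) (P : 'M[R]_(1 + d)) (Y : 'M[R]_(d, 1 + d))
  (Xk : state) : R :=
  wnormM (Y - Xk (nd i)) P / 2 + ipM (gradS Fobj Xk (nd i)) (Y - Xk (nd i)).

Definition Hblk a (Pi : node n -> 'M[R]_(1 + d)) (Y : blk a) (Xk : state) : R :=
  (\sum_(i < n a) wnormM (Y i - Xk (nd i)) (Pi (nd i))) / 2
  + ipB (blockof (gradS Fobj Xk) a) (blk_sub Y (blockof Xk a)).

Definition wnPi (Pi : node n -> 'M[R]_(1 + d)) (Y : state) : R :=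
  \sum_(v : node n) wnormM (Y v) (Pi v).

End Problem.

Arguments blockof {R d A n} X a.

From HB Require Import structures.
From mathcomp Require Import all_boot all_order all_algebra.
From mathcomp Require Import all_classical all_reals all_analysis.
From mathcomp Require Import ring lra.
Set Implicit Arguments. Unset Strict Implicit. Unset Printing Implicit Defensive.
Import Order.TTheory GRing.Theory Num.Theory.
Import numFieldNormedType.Exports.
Local Open Scope classical_set_scope.
Local Open Scope ring_scope.

(* Every summand E^{ab}_{ij}( . | X^(k)) majorizes F^{ab}_{ij}: the decoupled form p
   dominates q because |A - B|^2 <= 2|A|^2 + 2|B|^2 and rotations preserve the
   Frobenius norm, and for a <> b the concave rho moreover lies below its tangent at
   q(X^(k)), whose slope omega is in [0, 1]. Summing gives F <= G <= H, with equality
   at X^(k). The quadratic part of H is zeta |.|^2 + sum omega p, and each p splits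
   into one quadratic form per node; this is the block-diagonal Pi^(k), and putting
   every omega to 1 bounds it independently of X^(k). Since G and H share their linear
   part, the matrix inequalities (c) and (e) follow from the functional ones, tested
   at X^(k) + Y, resp. X^(k) +- Y, for Y supported on one row. *)

Section OneSidedCalculus.
Variable R : realType.

Lemma concave_le_tangent (f : R -> R) (s1 s2 l : R) : lk_concave f ->
  0 <= s1 -> 0 <= s2 ->
  (fun h => h^-1 * (f (s1 + h) - f s1)) @ within [set h | 0 <= s1 + h] 0^' --> l ->
  f s2 <= f s1 + l * (s2 - s1).
Proof.
move=> f_concave s1_ge0 s2_ge0 fl; set D := s2 - s1.
have [D0|Dn0] := eqVneq D 0.
  by rewrite D0 mulr0 addr0 -(subrK s1 s2) -/D D0 add0r.
set q := fun h => h^-1 * (f (s1 + h) - f s1).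
have chord t : 0 < t <= 1 -> f s2 - f s1 <= q (t * D) * D.
  case/andP=> t0 t1; have := f_concave s2 s1 t s2_ge0 s1_ge0; rewrite ltW //= t1 => /(_ isT).
  have -> : t * s2 + (1 - t) * s1 = s1 + t * D by rewrite /D; ring.
  have -> : q (t * D) * D = (f (s1 + t * D) - f s1) / t.
    by rewrite /q; field; rewrite Dn0 gt_eqF.
  rewrite ler_pdivlMr //; lra.
have tD : (fun t => t * D) @ 0^'+ --> within [set h | 0 <= s1 + h] 0^'.
  move=> P /= [e /= e0 He].
  have De : 0 < e / `|D| by rewrite divr_gt0 // normr_gt0.
  change (\forall t \near 0^'+, P (t * D)); near=> t.
  have t0 : 0 < t by near: t; exact: nbhs_right_gt.
  have t1 : t <= 1 by near: t; apply: nbhs_right_le.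
  have te : t < e / `|D| by near: t; apply: nbhs_right_lt.
  apply: He.
  - by rewrite /ball /= sub0r normrN normrM gtr0_norm // -ltr_pdivlMr // normr_gt0.
  - by rewrite mulf_neq0 // gt_eqF.
  - rewrite /D; nra.
rewrite addrC -lerBlDr; apply: (@cvgr_to_ge R (0:R)^'+ _ R (fun t => q (t * D) * D)).
  exact: (cvgM (cvg_comp _ _ tD fl) (cvg_cst D)).
near=> t; apply: chord; apply/andP; split; near: t; first exact: nbhs_right_gt.
exact: nbhs_right_le.
Unshelve. all: by end_near. Qed.

Lemma slope_id_cvg (S : set R) (s : R) :
  (fun h => h^-1 * (s + h - s)) @ within S 0^' --> (1 : R).
Proof.
have one : (fun=> 1) @ within S 0^' --> (1 : R) by apply: cvg_cst.
apply: cvg_trans one; apply: near_eq_cvg.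
rewrite near_withinE; near=> h => _.
have h0 : h != 0 by near: h; exact: nbhs_dnbhs_neq.
by rewrite addrC addKr mulVf.
Unshelve. all: by end_near. Qed.

Lemma slope_half_cvg (g : R -> R) (S : set R) (s l : R) :
  (fun h => h^-1 * (g (s + h) - g s)) @ within S 0^' --> l ->
  (fun h => h^-1 * (g (s + h) / 2 - g s / 2)) @ within S 0^' --> l / 2.
Proof.
move=> gl; have -> : (fun h => h^-1 * (g (s + h) / 2 - g s / 2)) =
    (fun h => h^-1 * (g (s + h) - g s)) \* (fun=> 2^-1).
  by apply: funext => h /=; rewrite -mulrBl mulrA.
by apply: cvgM => //; exact: cvg_cst.
Qed.

(* Written exactly as the quotient inside [derive1 f 0], hence the [h + 0]. *)
Definition dquot (f : R -> R) (h : R) : R := h^-1 *: (f (h + 0) - f 0).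

Lemma derive1_dquot (f : R -> R) (l : R) : dquot f @ 0^' --> l -> derive1 f 0 = l.
Proof. exact: norm_cvg_lim. Qed.

Lemma cvg_dquotD (f g : R -> R) (lf lg : R) :
  dquot f @ 0^' --> lf -> dquot g @ 0^' --> lg ->
  dquot (fun t => f t + g t) @ 0^' --> lf + lg.
Proof.
move=> fl gl; have -> : dquot (fun t => f t + g t) = dquot f \+ dquot g.
  by apply: funext => h; rewrite /dquot /= opprD addrACA scalerDr.
exact: cvgD.
Qed.

Lemma cvg_dquot_sum (I : Type) (s : seq I) (P : pred I) (f : I -> R -> R) (l : I -> R) :
  (forall i, P i -> dquot (f i) @ 0^' --> l i) ->
  dquot (fun t => \sum_(i <- s | P i) f i t) @ 0^' --> \sum_(i <- s | P i) l i.
Proof.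
move=> fl; have -> : dquot (fun t => \sum_(i <- s | P i) f i t) =
    fun h => \sum_(i <- s | P i) dquot (f i) h.
  by apply: funext => h; rewrite /dquot -sumrB scaler_sumr.
apply: cvg_big => //; exact: add_continuous.
Qed.

(* [g] is only differentiable within the half-line [al + h >= 0] (think of [al = 0]),
   so the path must stay in it. *)
Lemma dquot_comp_quadratic (g : R -> R) (al be ga l : R) :
  (fun h => h^-1 * (g (al + h) - g al)) @ within [set h | 0 <= al + h] 0^' --> l ->
  (forall t, 0 <= al + t * be + t ^+ 2 * ga) ->
  dquot (fun t => g (al + t * be + t ^+ 2 * ga)) @ 0^' --> l * be.
Proof.
move=> gl path_ge0; set S := [set h | 0 <= al + h].
(* Extending the slope of [g] by [l] at [0] factors the quotient as
   [phi (k h) * (be + h * ga)], also where [k h = 0]. *)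
pose phi h := if h == 0 then l else h^-1 * (g (al + h) - g al).
pose k h := h * be + h ^+ 2 * ga.
have phil : phi @ within S (nbhs 0) --> l.
  move=> P /= Pl; have [e /= e0 He] := gl P Pl.
  exists e => // h /= he Sh; rewrite /phi; case: eqP => [_|/eqP h0].
    exact: nbhs_singleton.
  exact: He.
have id0 : (fun h : R => h) @ 0^' --> (0 : R) by apply: cvg_within.
have lin : (fun h => be + h * ga) @ 0^' --> be.
  rewrite -[X in _ --> X]addr0 -[X in _ --> _ + X](mul0r ga).
  by apply: cvgD; [exact: cvg_cst | apply: cvgM => //; exact: cvg_cst].
have k0 : k @ 0^' --> within S (nbhs 0).
  move=> P /= [e /= e0 He].
  have kk : k @ 0^' --> 0.
    have -> : k = fun h => h * (be + h * ga) by apply: funext => h; rewrite /k; ring.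
    by rewrite -[X in _ --> X](mul0r be); apply: cvgM.
  have kb : \forall h \near 0^', ball 0 e (k h) := kk _ (nbhsx_ballx 0 e e0).
  change (\forall h \near 0^', P (k h)); near=> h.
  by apply: He; [near: h | rewrite /S /= addrA].
apply: cvg_trans (cvgM (cvg_comp _ _ k0 phil) lin).
apply: near_eq_cvg; near=> h.
have h0 : h != 0 by near: h; exact: nbhs_dnbhs_neq.
rewrite /dquot /phi /k /= !addr0 mul0r expr0n /= mul0r !addr0 -addrA.
have -> : h * be + h ^+ 2 * ga = h * (be + h * ga) by ring.
have [->|hk] := eqVneq (be + h * ga) 0; first by rewrite !mulr0 addr0 subrr scaler0.
rewrite mulf_eq0 (negbTE h0) (negbTE hk) /= -[_ *: _]/(_ * _); field.
by rewrite h0 hk.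
Unshelve. all: by end_near. Qed.

End OneSidedCalculus.

Section FrobeniusForms.
Variable R : realType.

Lemma ipMC m k (A B : 'M[R]_(m, k)) : ipM A B = ipM B A.
Proof. by apply: eq_bigr => r _; apply: eq_bigr => c _; rewrite mulrC. Qed.

Lemma ipMDr m k (A B C : 'M[R]_(m, k)) : ipM A (B + C) = ipM A B + ipM A C.
Proof.
rewrite /ipM -big_split; apply: eq_bigr => r _; rewrite -big_split.
by apply: eq_bigr => c _; rewrite mxE mulrDr.
Qed.

Lemma ipMZr m k (A B : 'M[R]_(m, k)) t : ipM A (t *: B) = t * ipM A B.
Proof.
rewrite /ipM mulr_sumr; apply: eq_bigr => r _; rewrite mulr_sumr.
by apply: eq_bigr => c _; rewrite mxE mulrCA.
Qed.

Lemma ipMDl m k (A B C : 'M[R]_(m, k)) : ipM (B + C) A = ipM B A + ipM C A.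
Proof. by rewrite ipMC ipMDr ![ipM A _]ipMC. Qed.

Lemma ipMZl m k (A B : 'M[R]_(m, k)) t : ipM (t *: B) A = t * ipM B A.
Proof. by rewrite ipMC ipMZr ipMC. Qed.

Lemma ipM0r m k (A : 'M[R]_(m, k)) : ipM A 0 = 0.
Proof. by rewrite -(scale0r 0) ipMZr mul0r. Qed.

Lemma ipMNr m k (A B : 'M[R]_(m, k)) : ipM A (- B) = - ipM A B.
Proof. by rewrite -scaleN1r ipMZr mulN1r. Qed.

Lemma fro2_ge0 m k (A : 'M[R]_(m, k)) : 0 <= fro2 A.
Proof. by apply: sumr_ge0 => r _; apply: sumr_ge0 => c _; rewrite -expr2 sqr_ge0. Qed.

Lemma fro2_shift m k (M N : 'M[R]_(m, k)) t :
  fro2 (M + t *: N) = fro2 M + t * (2 * ipM M N) + t ^+ 2 * fro2 N.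
Proof. by rewrite /fro2 ipMDl !ipMDr !ipMZl !ipMZr [ipM N M]ipMC; ring. Qed.

Lemma fro2Z m k (M : 'M[R]_(m, k)) t : fro2 (t *: M) = t ^+ 2 * fro2 M.
Proof. by rewrite /fro2 ipMZl ipMZr mulrA expr2. Qed.

Lemma fro2N m k (M : 'M[R]_(m, k)) : fro2 (- M) = fro2 M.
Proof. by rewrite -scaleN1r fro2Z sqrrN expr1n mul1r. Qed.

Lemma fro2_sub_le m k (M N : 'M[R]_(m, k)) : fro2 (M - N) <= 2 * fro2 M + 2 * fro2 N.
Proof.
have := fro2_ge0 (M + N).
rewrite -[N in M + N]scale1r -scaleN1r !fro2_shift; lra.
Qed.

Lemma fro2_tr m k (M : 'M[R]_(m, k)) : fro2 M = \tr (M *m M^T).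
Proof.
rewrite /fro2 /ipM /mxtrace; apply: eq_bigr => r _; rewrite !mxE.
by apply: eq_bigr => c _; rewrite !mxE.
Qed.

Lemma fro2_mulSO m k (M : 'M[R]_(m, k)) Q : SOmx Q -> fro2 (M *m Q) = fro2 M.
Proof.
case=> QtQ _; rewrite !fro2_tr trmx_mul !mulmxA -[M *m Q *m Q^T]mulmxA.
by rewrite (mulmx1C QtQ) mulmx1.
Qed.

Lemma wnormM_BBt m k p (Y : 'M[R]_(m, k)) (B : 'M[R]_(k, p)) :
  wnormM Y (B *m B^T) = fro2 (Y *m B).
Proof. by rewrite fro2_tr /wnormM trmx_mul !mulmxA. Qed.

Lemma wnormM1 m k (Y : 'M[R]_(m, k)) : wnormM Y 1%:M = fro2 Y.
Proof. by rewrite -(mulmx1 1%:M) -{2}trmx1 wnormM_BBt mulmx1. Qed.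

Lemma wnormM_qform m k (Y : 'M[R]_(m, k)) P :
  wnormM Y P = \sum_(r < m) qform (fun u w => P u w) (fun c => Y r c).
Proof.
rewrite /wnormM /mxtrace; apply: eq_bigr => r _; rewrite /qform mxE.
rewrite [RHS]exchange_big /=; apply: eq_bigr => c' _; rewrite !mxE mulr_suml.
by apply: eq_bigr => c _; rewrite ?mxE.
Qed.

Lemma wnormMD m k (Y : 'M[R]_(m, k)) P Q : wnormM Y (P + Q) = wnormM Y P + wnormM Y Q.
Proof. by rewrite /wnormM mulmxDr mulmxDl mxtraceD. Qed.

Lemma wnormMZ m k (Y : 'M[R]_(m, k)) t P : wnormM Y (t *: P) = t * wnormM Y P.
Proof. by rewrite /wnormM -scalemxAr -scalemxAl mxtraceZ. Qed.

Lemma wnormM0 m k (Y : 'M[R]_(m, k)) : wnormM Y 0 = 0.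
Proof. by rewrite /wnormM mulmx0 mul0mx mxtrace0. Qed.

Lemma wnormM0l m k (P : 'M[R]_k) : wnormM (0 : 'M[R]_(m, k)) P = 0.
Proof. by rewrite /wnormM !mul0mx mxtrace0. Qed.

Lemma wnormM_sum m k (Y : 'M[R]_(m, k)) (I : Type) (s : seq I) (P : pred I)
    (F : I -> 'M[R]_k) :
  wnormM Y (\sum_(i <- s | P i) F i) = \sum_(i <- s | P i) wnormM Y (F i).
Proof. exact: (big_morph _ (wnormMD Y) (wnormM0 Y)). Qed.

Definition qformM k (P : 'M[R]_k) (z : 'I_k -> R) : R := qform (fun u w => P u w) z.

Lemma qformMD k (P Q : 'M[R]_k) z : qformM (P + Q) z = qformM P z + qformM Q z.
Proof.
rewrite /qformM /qform -big_split; apply: eq_bigr => u _; rewrite -big_split.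
by apply: eq_bigr => w _; rewrite mxE mulrDr mulrDl.
Qed.

Lemma qformMZ k (P : 'M[R]_k) t z : qformM (t *: P) z = t * qformM P z.
Proof.
rewrite /qformM /qform mulr_sumr; apply: eq_bigr => u _; rewrite mulr_sumr.
by apply: eq_bigr => w _; rewrite mxE; ring.
Qed.

Lemma qformM0 k z : qformM (0 : 'M[R]_k) z = 0.
Proof. by rewrite -(scale0r 0) qformMZ mul0r. Qed.

Lemma qformM_sum k (I : Type) (s : seq I) (P : pred I) (F : I -> 'M[R]_k) z :
  qformM (\sum_(i <- s | P i) F i) z = \sum_(i <- s | P i) qformM (F i) z.
Proof. exact: (big_morph (fun P => qformM P z) (fun P Q => qformMD P Q z) (qformM0 z)). Qed.

Lemma qform0 (J : finType) (P : J -> J -> R) : qform P (fun=> 0) = 0.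
Proof. by rewrite /qform big1 // => u _; rewrite big1 // => w _; rewrite !mul0r. Qed.

Lemma qformN (J : finType) (P : J -> J -> R) z : qform P (fun u => - z u) = qform P z.
Proof. by apply: eq_bigr => u _; apply: eq_bigr => w _; rewrite /=; ring. Qed.

Lemma psdM_ge0 k (P : 'M[R]_k) z : psdM P -> 0 <= qformM P z.
Proof. by case=> _; apply. Qed.

Lemma psdMD k (P Q : 'M[R]_k) : psdM P -> psdM Q -> psdM (P + Q).
Proof.
move=> [sP pP] [sQ pQ]; split=> [u w|z]; first by rewrite !mxE sP sQ.
by have := qformMD P Q z; rewrite /qformM => ->; apply: addr_ge0.
Qed.

Lemma psdMZ k (P : 'M[R]_k) t : 0 <= t -> psdM P -> psdM (t *: P).
Proof.
move=> t0 [sP pP]; split=> [u w|z]; first by rewrite !mxE sP.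
by have := qformMZ P t z; rewrite /qformM => ->; apply: mulr_ge0.
Qed.

Lemma psdM0 k : psdM (0 : 'M[R]_k).
Proof. by split=> [u w|z]; rewrite ?mxE // -/(qformM 0 z) qformM0. Qed.

Lemma psdM_sum k (I : Type) (s : seq I) (P : pred I) (F : I -> 'M[R]_k) :
  (forall i, P i -> psdM (F i)) -> psdM (\sum_(i <- s | P i) F i).
Proof. by move=> FP; apply: big_ind => //; [exact: psdM0 | exact: psdMD]. Qed.

Lemma psdM_BBt k p (B : 'M[R]_(k, p)) : psdM (B *m B^T).
Proof.
split=> [u w|z].
  by rewrite !mxE; apply: eq_bigr => i _; rewrite !mxE mulrC.
have := wnormM_BBt (\row_c z c) B; rewrite wnormM_qform big_ord1.
have -> : (fun c => (\row_c0 z c0) 0 c) = z by apply: funext => c; rewrite mxE.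
by move=> ->; apply: fro2_ge0.
Qed.

Lemma psdM1 k : psdM (1%:M : 'M[R]_k).
Proof. by have := psdM_BBt (1%:M : 'M[R]_k); rewrite trmx1 mulmx1. Qed.

End FrobeniusForms.

Lemma sum_node (R : realType) (A : nat) (n : 'I_A -> nat) (F : node n -> R) :
  \sum_(v : node n) F v = \sum_(a < A) \sum_(i < n a) F (nd i).
Proof.
rewrite (sig_big_dep xpredT (fun _ => xpredT) (fun a (i : 'I_(n a)) => F (nd i))) /=.
by apply: eq_bigr => -[a i].
Qed.

Section States.
Variables (R : realType) (d A : nat) (n : 'I_A -> nat).
Local Notation st := (state R d n).

Lemma st_decomp (Y : st) w :
  \sum_(v : node n) \sum_(r < d) \sum_(c < 1 + d) Y v r c *: e_st R v r c w = Y w.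
Proof.
rewrite (bigD1 w) //= [X in _ + X]big1 ?addr0.
  rewrite [RHS]matrix_sum_delta; apply: eq_bigr => r _; apply: eq_bigr => c _.
  by rewrite /e_st eqxx.
move=> v /negbTE vw; rewrite big1 // => r _; rewrite big1 // => c _.
by rewrite /e_st eq_sym vw scaler0.
Qed.

Definition st_linear (L : st -> R) : Prop :=
  (forall E E' : st, L (fun w => E w + E' w) = L E + L E')
  /\ (forall c (E : st), L (fun w => c *: E w) = c * L E).

Lemma st_linearZ (L : st -> R) c : st_linear L -> st_linear (fun E => c * L E).
Proof. by case=> LD LZ; split=> [E E'|c' E]; rewrite ?LD ?LZ; ring. Qed.

Lemma st_linearD (L L' : st -> R) :
  st_linear L -> st_linear L' -> st_linear (fun E => L E + L' E).
Proof. by case=> LD LZ [LD' LZ']; split=> [E E'|c E]; rewrite ?LD ?LD' ?LZ ?LZ'; ring. Qed.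

Lemma st_linear_sum (I : Type) (s : seq I) (P : pred I) (L : I -> st -> R) :
  (forall i, P i -> st_linear (L i)) ->
  st_linear (fun E => \sum_(i <- s | P i) L i E).
Proof.
move=> Llin; split=> [E E'|c E].
  by rewrite -big_split; apply: eq_bigr => i /Llin [-> _].
by rewrite mulr_sumr; apply: eq_bigr => i /Llin [_ ->].
Qed.

Lemma st_linear_big (L : st -> R) (I : Type) (s : seq I) (P : pred I) (F : I -> st) :
  st_linear L -> L (fun w => \sum_(i <- s | P i) F i w) = \sum_(i <- s | P i) L (F i).
Proof.
case=> LD LZ; elim: s => [|i s IH].
  rewrite big_nil -(mul0r (L (fun _ => 0))) -LZ.
  by congr L; apply: funext => w; rewrite big_nil scale0r.
rewrite big_cons -IH; case Pi: (P i); rewrite -?LD; congr L.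
all: by apply: funext => w; rewrite big_cons Pi.
Qed.

Lemma st_linear_coord (L : st -> R) (Y : st) : st_linear L ->
  L Y = \sum_(v : node n) \sum_(r < d) \sum_(c < 1 + d) Y v r c * L (e_st R v r c).
Proof.
move=> Llin; rewrite -{1}(funext (st_decomp Y)) st_linear_big //.
apply: eq_bigr => v _; rewrite st_linear_big //; apply: eq_bigr => r _.
by rewrite st_linear_big //; apply: eq_bigr => c _; rewrite (proj2 Llin).
Qed.

Lemma ipS_gradS (f : st -> R) (X : st) (L : st -> R) :
  (forall E : st, dquot (fun t => f (fun w => X w + t *: E w)) @ 0^' --> L E) ->
  st_linear L -> forall Y, ipS (gradS f X) Y = L Y.
Proof.
move=> fL Llin Y; rewrite (st_linear_coord Y Llin) /ipS /ipM.
apply: eq_bigr => v _; apply: eq_bigr => r _; apply: eq_bigr => c _.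
by rewrite mxE (derive1_dquot (fL _)) mulrC.
Qed.

Lemma st_oppE (Y : st) : (fun w => - Y w) = (fun w => (-1) *: Y w).
Proof. by apply: funext => w; rewrite scaleN1r. Qed.

Lemma st_subK (X Xk : st) : (fun w => Xk w + st_sub X Xk w) = X.
Proof. by apply: funext => w; rewrite /st_sub addrC subrK. Qed.

Lemma st_sub_addl (Xk Y : st) : st_sub (fun w => Xk w + Y w) Xk = Y.
Proof. by apply: funext => w; rewrite /st_sub addrC addKr. Qed.

Lemma st_subxx (Xk : st) : st_sub Xk Xk = fun _ => 0.
Proof. by apply: funext => w; rewrite /st_sub subrr. Qed.

Lemma ipS0r (g : st) : ipS g (fun _ => 0) = 0.
Proof. by rewrite /ipS big1 // => v _; rewrite ipM0r. Qed.

Lemma ipSNr (g Y : st) : ipS g (fun w => - Y w) = - ipS g Y.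
Proof. by rewrite /ipS -sumrN; apply: eq_bigr => v _; rewrite ipMNr. Qed.

Lemma nrm2_ge0 (Y : st) : 0 <= nrm2 Y.
Proof. by apply: sumr_ge0 => v _; apply: fro2_ge0. Qed.

Lemma nrm2N (Y : st) : nrm2 (fun w => - Y w) = nrm2 Y.
Proof. by apply: eq_bigr => v _; rewrite -/(fro2 _) fro2N. Qed.

Lemma nrm2_0 : nrm2 ((fun _ => 0) : st) = 0.
Proof. exact: ipS0r. Qed.

End States.

Section Residuals.
Variables (R : realType) (d A : nat) (n : 'I_A -> nat) (D : pgo_data R d n).
Local Notation st := (state R d n).

Definition rot_res a b (i : 'I_(n a)) (j : 'I_(n b)) (X : st) : 'M[R]_d :=
  Rv X i *m Rt D i j - Rv X j.
Definition trans_res a b (i : 'I_(n a)) (j : 'I_(n b)) (X : st) : 'M[R]_(d, 1) :=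
  Rv X i *m tt D i j + tv X i - tv X j.
Definition qf_bil a b (i : 'I_(n a)) (j : 'I_(n b)) (X Y : st) : R :=
  kap D i j * ipM (rot_res i j X) (rot_res i j Y)
  + tau D i j * ipM (trans_res i j X) (trans_res i j Y).

Lemma RvD (X Y : st) a (i : 'I_(n a)) : Rv (fun w => X w + Y w) i = Rv X i + Rv Y i.
Proof. by apply/matrixP => r c; rewrite !mxE. Qed.
Lemma RvZ (X : st) t a (i : 'I_(n a)) : Rv (fun w => t *: X w) i = t *: Rv X i.
Proof. by apply/matrixP => r c; rewrite !mxE. Qed.
Lemma tvD (X Y : st) a (i : 'I_(n a)) : tv (fun w => X w + Y w) i = tv X i + tv Y i.
Proof. by apply/matrixP => r c; rewrite !mxE. Qed.
Lemma tvZ (X : st) t a (i : 'I_(n a)) : tv (fun w => t *: X w) i = t *: tv X i.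
Proof. by apply/matrixP => r c; rewrite !mxE. Qed.

Section Edge.
Variables (a b : 'I_A) (i : 'I_(n a)) (j : 'I_(n b)).

Lemma rot_resD X Y : rot_res i j (fun w => X w + Y w) = rot_res i j X + rot_res i j Y.
Proof. by rewrite /rot_res !RvD mulmxDl opprD addrACA. Qed.
Lemma rot_resZ X t : rot_res i j (fun w => t *: X w) = t *: rot_res i j X.
Proof. by rewrite /rot_res !RvZ -scalemxAl scalerBr. Qed.
Lemma trans_resD X Y :
  trans_res i j (fun w => X w + Y w) = trans_res i j X + trans_res i j Y.
Proof.
by rewrite /trans_res !RvD !tvD mulmxDl (addrACA (Rv X i *m _)) opprD (addrACA (_ + tv X i)).
Qed.
Lemma trans_resZ X t : trans_res i j (fun w => t *: X w) = t *: trans_res i j X.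
Proof. by rewrite /trans_res !RvZ !tvZ -scalemxAl -scalerDr -scalerBr. Qed.

Lemma qf_bil_linear X : st_linear (qf_bil i j X).
Proof.
split=> [E E'|c E]; rewrite /qf_bil ?rot_resD ?trans_resD ?rot_resZ ?trans_resZ.
  by rewrite !ipMDr; ring.
by rewrite !ipMZr; ring.
Qed.

Lemma qfE X :
  qf D i j X = kap D i j * fro2 (rot_res i j X) + tau D i j * fro2 (trans_res i j X).
Proof. by []. Qed.

Lemma qfZ t X : qf D i j (fun w => t *: X w) = t ^+ 2 * qf D i j X.
Proof. by rewrite !qfE rot_resZ trans_resZ !fro2Z; ring. Qed.

Lemma qf_bilN X Y : qf_bil i j X (fun w => - Y w) = - qf_bil i j X Y.
Proof. by rewrite st_oppE (proj2 (qf_bil_linear X)) mulN1r. Qed.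

Lemma qf_shift X Y t :
  qf D i j (fun w => X w + t *: Y w)
  = qf D i j X + t * (2 * qf_bil i j X Y) + t ^+ 2 * qf D i j Y.
Proof.
by rewrite !qfE rot_resD trans_resD rot_resZ trans_resZ !fro2_shift /qf_bil; ring.
Qed.

Lemma qf_add X Y :
  qf D i j (fun w => X w + Y w) = qf D i j X + 2 * qf_bil i j X Y + qf D i j Y.
Proof.
have -> : (fun w => X w + Y w) = (fun w => X w + 1 *: Y w).
  by apply: funext => w; rewrite scale1r.
by rewrite qf_shift expr1n !mul1r.
Qed.

Lemma qfN Y : qf D i j (fun w => - Y w) = qf D i j Y.
Proof. by rewrite st_oppE qfZ sqrrN expr1n mul1r. Qed.

Lemma pfZ t Y : pf D i j (fun w => t *: Y w) = t ^+ 2 * pf D i j Y.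
Proof. by rewrite /pf !RvZ !tvZ -scalemxAl -(scalerDr t) !fro2Z; ring. Qed.

Lemma pfN Y : pf D i j (fun w => - Y w) = pf D i j Y.
Proof. by rewrite st_oppE pfZ sqrrN expr1n mul1r. Qed.

Lemma pf0 : pf D i j (fun _ => 0) = 0.
Proof.
have -> : (fun _ => 0) = (fun w => 0 *: (fun _ => 0 : 'M[R]_(d, 1 + d)) w) :> st.
  by apply: funext => w; rewrite scale0r.
by rewrite pfZ expr0n mul0r.
Qed.

Hypotheses (kap_ge0 : 0 <= kap D i j) (tau_ge0 : 0 <= tau D i j).

Lemma qf_ge0 X : 0 <= qf D i j X.
Proof. by rewrite qfE addr_ge0 // mulr_ge0 // fro2_ge0. Qed.

Lemma qf_le_pf Y : SOmx (Rt D i j) -> qf D i j Y <= pf D i j Y.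
Proof.
move=> Rt_SO; rewrite qfE /pf /rot_res /trans_res.
have rot := fro2_sub_le (Rv Y i *m Rt D i j) (Rv Y j); rewrite fro2_mulSO // in rot.
have tr := fro2_sub_le (Rv Y i *m tt D i j + tv Y i) (tv Y j).
apply: (le_trans (lerD (ler_wpM2l kap_ge0 rot) (ler_wpM2l tau_ge0 tr))).
by rewrite le_eqVlt; apply/orP; left; apply/eqP; ring.
Qed.

End Edge.
End Residuals.

Section EdgeSums.
Variables (R : realType) (d A : nat) (n : 'I_A -> nat) (D : pgo_data R d n).
Implicit Types (f g : forall a : 'I_A, 'I_(n a) -> 'I_(n a) -> R)
  (F G : forall a b : 'I_A, 'I_(n a) -> 'I_(n b) -> R).

Lemma sum_aaD f g : sum_aa D (fun a i j => f a i j + g a i j) = sum_aa D f + sum_aa D g.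
Proof. by rewrite /sum_aa -big_split; apply: eq_bigr => a _; rewrite -big_split. Qed.

Lemma sum_abD F G :
  sum_ab D (fun a b i j => F a b i j + G a b i j) = sum_ab D F + sum_ab D G.
Proof.
rewrite /sum_ab -big_split; apply: eq_bigr => a _; rewrite -big_split.
by apply: eq_bigr => b _; rewrite -big_split.
Qed.

Lemma sum_aaZ c f : c * sum_aa D f = sum_aa D (fun a i j => c * f a i j).
Proof. by rewrite /sum_aa mulr_sumr; apply: eq_bigr => a _; rewrite mulr_sumr. Qed.

Lemma sum_abZ c F : c * sum_ab D F = sum_ab D (fun a b i j => c * F a b i j).
Proof.
rewrite /sum_ab mulr_sumr; apply: eq_bigr => a _; rewrite mulr_sumr.
by apply: eq_bigr => b _; rewrite mulr_sumr.
Qed.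

Lemma eq_sum_aa f g : (forall a e, e \in Edg D a a -> f a e.1 e.2 = g a e.1 e.2) ->
  sum_aa D f = sum_aa D g.
Proof. by move=> fg; apply: eq_bigr => a _; apply: eq_bigr => e; apply: fg. Qed.

Lemma eq_sum_ab F G : (forall a b e, e \in Edg D a b -> F a b e.1 e.2 = G a b e.1 e.2) ->
  sum_ab D F = sum_ab D G.
Proof.
by move=> FG; apply: eq_bigr => a _; apply: eq_bigr => b _; apply: eq_bigr => e; apply: FG.
Qed.

Lemma ler_sum_aa f g : (forall a e, e \in Edg D a a -> f a e.1 e.2 <= g a e.1 e.2) ->
  sum_aa D f <= sum_aa D g.
Proof. by move=> fg; apply: ler_sum => a _; apply: ler_sum => e; apply: fg. Qed.

Lemma ler_sum_ab F G : (forall a b e, e \in Edg D a b -> F a b e.1 e.2 <= G a b e.1 e.2) ->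
  sum_ab D F <= sum_ab D G.
Proof.
by move=> FG; apply: ler_sum => a _; apply: ler_sum => b _; apply: ler_sum => e; apply: FG.
Qed.

End EdgeSums.

Section Gradient.
Variables (R : realType) (d A : nat) (n : 'I_A -> nat) (D : pgo_data R d n).
Variables (rho drho : R -> R).
Hypotheses (LK : loss_kernel rho drho) (Dok : data_ok D).
Local Notation st := (state R d n).

Lemma Fe_dquot a b (i : 'I_(n a)) (j : 'I_(n b)) (X E : st) :
  0 <= kap D i j -> 0 <= tau D i j ->
  dquot (fun t => Fe D rho i j (fun w => X w + t *: E w)) @ 0^' -->
  omega D drho i j X * qf_bil D i j X E.
Proof.
move=> kap_ge0 tau_ge0; set B := qf_bil D i j X E; set q := qf D i j X.
have path_ge0 t : 0 <= q + t * (2 * B) + t ^+ 2 * qf D i j E.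
  by rewrite -qf_shift qf_ge0.
pose g := if a == b then fun s => s / 2 else fun s => rho s / 2.
have -> : (fun t => Fe D rho i j (fun w => X w + t *: E w)) =
    (fun t => g (q + t * (2 * B) + t ^+ 2 * qf D i j E)).
  by apply: funext => t; rewrite /Fe /g qf_shift; case: (a == b).
rewrite /omega /g; case: (a == b).
  rewrite (_ : 1 * B = 1 / 2 * (2 * B)); last by field.
  apply: (@dquot_comp_quadratic _ (fun s => s / 2)) => //.
  exact: (slope_half_cvg (g := fun s => s) (slope_id_cvg _ _)).
rewrite (_ : drho q * B = drho q / 2 * (2 * B)); last by field.
apply: (@dquot_comp_quadratic _ (fun s => rho s / 2)) => //; apply: slope_half_cvg.
by case: LK => _ [/(_ q (qf_ge0 kap_ge0 tau_ge0 X)) + _] _ _ _.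
Qed.

Definition Fobj_deriv (X E : st) : R :=
  sum_aa D (fun a i j => omega D drho i j X * qf_bil D i j X E)
  + sum_ab D (fun a b i j => omega D drho i j X * qf_bil D i j X E).

Lemma Fobj_dquot (X E : st) :
  dquot (fun t => Fobj D rho (fun w => X w + t *: E w)) @ 0^' --> Fobj_deriv X E.
Proof.
rewrite /Fobj /Fobj_deriv /sum_aa /sum_ab; apply: cvg_dquotD.
  apply: cvg_dquot_sum => a _; apply: cvg_dquot_sum => e /Dok[_ kap_ge0 tau_ge0].
  exact: Fe_dquot.
apply: cvg_dquot_sum => a _; apply: cvg_dquot_sum => b _.
apply: cvg_dquot_sum => e /Dok[_ kap_ge0 tau_ge0]; exact: Fe_dquot.
Qed.

Lemma Fobj_deriv_linear (X : st) : st_linear (Fobj_deriv X).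
Proof.
apply: st_linearD; apply: st_linear_sum => a _; apply: st_linear_sum.
  by move=> e _; apply/st_linearZ/qf_bil_linear.
by move=> b _; apply: st_linear_sum => e _; apply/st_linearZ/qf_bil_linear.
Qed.

Lemma ipS_gradS_Fe a b (i : 'I_(n a)) (j : 'I_(n b)) (X Y : st) :
  0 <= kap D i j -> 0 <= tau D i j ->
  ipS (gradS (Fe D rho i j) X) Y = omega D drho i j X * qf_bil D i j X Y.
Proof.
move=> kap_ge0 tau_ge0.
exact: ipS_gradS (fun E => Fe_dquot (E := E) kap_ge0 tau_ge0)
  (st_linearZ _ (qf_bil_linear D i j X)) Y.
Qed.

Lemma ipS_gradS_Fobj (X Y : st) : ipS (gradS (Fobj D rho) X) Y = Fobj_deriv X Y.
Proof. exact: ipS_gradS (@Fobj_dquot X) (Fobj_deriv_linear X) Y. Qed.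

End Gradient.

Section Majorizer.
Variables (R : realType) (d A : nat) (n : 'I_A -> nat) (D : pgo_data R d n).
Variables (rho drho : R -> R) (zeta : R).
Hypotheses (LK : loss_kernel rho drho) (Dok : data_ok D).
Local Notation st := (state R d n).

Definition rot_sel : 'M[R]_(1 + d, d) := col_mx 0 1%:M.
Definition tr_sel : 'M[R]_(1 + d, 1) := col_mx 1%:M 0.
Definition edge_sel a b (i : 'I_(n a)) (j : 'I_(n b)) : 'M[R]_(1 + d, 1) :=
  col_mx 1%:M (tt D i j).

Lemma mul_rot_sel (M : 'M[R]_(d, 1 + d)) : M *m rot_sel = rsubmx M.
Proof. by rewrite -{1}(hsubmxK M) /rot_sel mul_row_col mulmx0 add0r mulmx1. Qed.
Lemma mul_tr_sel (M : 'M[R]_(d, 1 + d)) : M *m tr_sel = lsubmx M.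
Proof. by rewrite -{1}(hsubmxK M) /tr_sel mul_row_col mulmx0 addr0 mulmx1. Qed.
Lemma mul_edge_sel a b (i : 'I_(n a)) (j : 'I_(n b)) (M : 'M[R]_(d, 1 + d)) :
  M *m edge_sel i j = rsubmx M *m tt D i j + lsubmx M.
Proof. by rewrite -{1}(hsubmxK M) /edge_sel mul_row_col mulmx1 addrC. Qed.

Definition pf_mx a b (i : 'I_(n a)) (j : 'I_(n b)) (v : node n) : 'M[R]_(1 + d) :=
  2 *: ((if nd i == v then kap D i j *: (rot_sel *m rot_sel^T)
                           + tau D i j *: (edge_sel i j *m (edge_sel i j)^T) else 0)
        + (if nd j == v then kap D i j *: (rot_sel *m rot_sel^T)
                             + tau D i j *: (tr_sel *m tr_sel^T) else 0)).

Lemma sum_wnormM_if (Y : st) (u : node n) (M : 'M[R]_(1 + d)) :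
  \sum_(v : node n) wnormM (Y v) (if u == v then M else 0) = wnormM (Y u) M.
Proof.
rewrite (bigD1 u) //= eqxx big1 ?addr0 // => v /negbTE vu.
by rewrite eq_sym vu wnormM0.
Qed.

Lemma wnormM_pf_mx a b (i : 'I_(n a)) (j : 'I_(n b)) (Y : st) :
  \sum_(v : node n) wnormM (Y v) (pf_mx i j v) = pf D i j Y.
Proof.
rewrite /pf_mx; under eq_bigr => v _ do rewrite wnormMZ wnormMD.
rewrite -mulr_sumr big_split /= !sum_wnormM_if !wnormMD !wnormMZ !wnormM_BBt.
by rewrite !mul_rot_sel !mul_tr_sel !mul_edge_sel /pf /Rv /tv; ring.
Qed.

Lemma psdM_pf_mx a b (i : 'I_(n a)) (j : 'I_(n b)) v :
  0 <= kap D i j -> 0 <= tau D i j -> psdM (pf_mx i j v).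
Proof.
move=> kap_ge0 tau_ge0.
have psd_if (c : bool) (M : 'M[R]_(1 + d)) : psdM M -> psdM (if c then M else 0).
  by case: c => // _; exact: psdM0.
apply: psdMZ => //; apply: psdMD; apply: psd_if; apply: psdMD.
all: by apply: psdMZ => //; exact: psdM_BBt.
Qed.

Definition Pi_w (om : forall a b : 'I_A, 'I_(n a) -> 'I_(n b) -> R) (v : node n)
    : 'M[R]_(1 + d) :=
  zeta *: 1%:M + (\sum_(a < A) \sum_(e in Edg D a a) om a a e.1 e.2 *: pf_mx e.1 e.2 v)
  + (\sum_(a < A) \sum_(b < A | b != a) \sum_(e in Edg D a b) om a b e.1 e.2 *: pf_mx e.1 e.2 v).

Lemma wnormM_Pi_w om (Y : st) :
  \sum_(v : node n) wnormM (Y v) (Pi_w om v) =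
  zeta * nrm2 Y + sum_aa D (fun a i j => om a a i j * pf D i j Y)
  + sum_ab D (fun a b i j => om a b i j * pf D i j Y).
Proof.
under eq_bigr => v _ do rewrite /Pi_w !wnormMD wnormMZ wnormM1 !wnormM_sum.
rewrite !big_split /= -mulr_sumr; congr (_ + _ + _).
  rewrite /sum_aa exchange_big; apply: eq_bigr => a _.
  under eq_bigr do rewrite wnormM_sum; rewrite exchange_big; apply: eq_bigr => e _.
  by under eq_bigr do rewrite wnormMZ; rewrite -mulr_sumr wnormM_pf_mx.
rewrite /sum_ab exchange_big; apply: eq_bigr => a _.
under eq_bigr do rewrite wnormM_sum; rewrite exchange_big; apply: eq_bigr => b _.
under eq_bigr do rewrite wnormM_sum; rewrite exchange_big; apply: eq_bigr => e _.
by under eq_bigr do rewrite wnormMZ; rewrite -mulr_sumr wnormM_pf_mx.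
Qed.

Lemma psdM_Pi_w om v : 0 <= zeta ->
  (forall a b (e : 'I_(n a) * 'I_(n b)), e \in Edg D a b -> 0 <= om a b e.1 e.2) ->
  psdM (Pi_w om v).
Proof.
move=> zeta_ge0 om_ge0; apply: psdMD; first apply: psdMD.
- by apply: psdMZ => //; apply: psdM1.
- apply: psdM_sum => a _; apply: psdM_sum => e eE; apply: psdMZ; first exact: om_ge0.
  by case: (Dok eE) => _; apply: psdM_pf_mx.
- apply: psdM_sum => a _; apply: psdM_sum => b _; apply: psdM_sum => e eE.
  apply: psdMZ; first exact: om_ge0.
  by case: (Dok eE) => _; apply: psdM_pf_mx.
Qed.

Lemma qformM_Pi_w om v (z : 'I_(1 + d) -> R) :
  qformM (Pi_w om v) z = zeta * qformM 1%:M z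
   + sum_aa D (fun a i j => om a a i j * qformM (pf_mx i j v) z)
   + sum_ab D (fun a b i j => om a b i j * qformM (pf_mx i j v) z).
Proof.
rewrite /Pi_w !qformMD qformMZ !qformM_sum; congr (_ + _ + _).
  by apply: eq_bigr => a _; rewrite qformM_sum; apply: eq_bigr => e _; rewrite qformMZ.
apply: eq_bigr => a _; rewrite qformM_sum; apply: eq_bigr => b _.
by rewrite qformM_sum; apply: eq_bigr => e _; rewrite qformMZ.
Qed.

Lemma omega_ge0_le1 a b (e : 'I_(n a) * 'I_(n b)) (Xk : st) : e \in Edg D a b ->
  0 <= omega D drho e.1 e.2 Xk <= 1.
Proof.
case/Dok=> _ kap_ge0 tau_ge0; rewrite /omega; case: (a == b); first by rewrite ler01 lexx.
by case: LK => _ _ _ [slope _] _; apply/slope/qf_ge0.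
Qed.

Definition Pik (Xk : st) := Pi_w (fun a b i j => omega D drho i j Xk).
Definition Pi_max := Pi_w (fun _ _ _ _ => 1).

Lemma psdM_Pik (Xk : st) v : 0 <= zeta -> psdM (Pik Xk v).
Proof.
move=> zeta_ge0; apply: psdM_Pi_w => // a b e eE.
by case/andP: (omega_ge0_le1 Xk eE).
Qed.

Lemma qdiagN_Pik_le_max (Xk : st) z : qdiagN (Pik Xk) z <= qdiagN Pi_max z.
Proof.
apply: ler_sum => v _; rewrite -!/(qformM _ _) !qformM_Pi_w -!addrA lerD2l.
have pf_mx_ge0 a b (e : 'I_(n a) * 'I_(n b)) : e \in Edg D a b ->
    0 <= qformM (pf_mx e.1 e.2 v) (fun c => z (v, c)).
  by case/Dok=> _ kap_ge0 tau_ge0; apply/psdM_ge0/psdM_pf_mx.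
apply: lerD; [apply: ler_sum_aa => a e eE | apply: ler_sum_ab => a b e eE].
all: by rewrite ler_wpM2r ?pf_mx_ge0 //; case/andP: (omega_ge0_le1 Xk eE).
Qed.

Definition Pi_bound (u w : colG d n) : R := if u.1 == w.1 then Pi_max u.1 u.2 w.2 else 0.

Lemma qform_Pi_bound z : qform Pi_bound z = qdiagN Pi_max z.
Proof.
rewrite /qform /qdiagN.
transitivity (\sum_(v : node n) \sum_(c : 'I_(1 + d)) \sum_(v' : node n)
    \sum_(c' : 'I_(1 + d)) z (v, c) * Pi_bound (v, c) (v', c') * z (v', c')).
  rewrite [RHS]pair_big /=; apply: eq_bigr => -[v c] _ /=.
  by rewrite [RHS]pair_big /=; apply: eq_bigr => -[v' c'] _.
apply: eq_bigr => v _; apply: eq_bigr => c _.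
rewrite (bigD1 v) //= [X in _ + X]big1 ?addr0.
  by apply: eq_bigr => c' _; rewrite /Pi_bound /= eqxx.
by move=> v' /negbTE vv; rewrite big1 // => c' _; rewrite /Pi_bound /= eq_sym vv mulr0 mul0r.
Qed.

Lemma psdf_Pi_bound : 0 <= zeta -> psdf Pi_bound.
Proof.
move=> zeta_ge0; have Pi_max_psd v : psdM (Pi_max v) by apply: psdM_Pi_w => // *; apply: ler01.
split=> [[v c] [v' c']|z]; last first.
  by rewrite qform_Pi_bound; apply: sumr_ge0 => v _; exact: psdM_ge0.
rewrite /Pi_bound /=; case: (eqVneq v v') => [<-|] //.
by case: (Pi_max_psd v) => sym _; apply: sym.
Qed.

Lemma Ee_expand a b (i : 'I_(n a)) (j : 'I_(n b)) (X Xk : st) :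
  0 <= kap D i j -> 0 <= tau D i j ->
  Ee D rho drho i j X Xk = 2^-1 * (omega D drho i j Xk * pf D i j (st_sub X Xk))
    + omega D drho i j Xk * qf_bil D i j Xk (st_sub X Xk) + Fe D rho i j Xk.
Proof. by move=> kap_ge0 tau_ge0; rewrite /Ee (ipS_gradS_Fe LK) //; ring. Qed.

Lemma Hfun_expand (X Xk : st) :
  Hfun D rho drho zeta X Xk = wnPi (Pik Xk) (st_sub X Xk) / 2
    + ipS (gradS (Fobj D rho) Xk) (st_sub X Xk) + Fobj D rho Xk.
Proof.
rewrite /Hfun (eq_sum_aa (g := fun a i j =>
    2^-1 * (omega D drho i j Xk * pf D i j (st_sub X Xk))
    + omega D drho i j Xk * qf_bil D i j Xk (st_sub X Xk) + Fe D rho i j Xk)); last first.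
  by move=> a e /Dok[_ kap_ge0 tau_ge0]; apply: Ee_expand.
rewrite (eq_sum_ab (G := fun a b i j =>
    2^-1 * (omega D drho i j Xk * pf D i j (st_sub X Xk))
    + omega D drho i j Xk * qf_bil D i j Xk (st_sub X Xk) + Fe D rho i j Xk)); last first.
  by move=> a b e /Dok[_ kap_ge0 tau_ge0]; apply: Ee_expand.
rewrite !sum_aaD !sum_abD -!sum_aaZ -!sum_abZ /wnPi wnormM_Pi_w (ipS_gradS_Fobj LK Dok).
by rewrite /Fobj_deriv /Fobj /=; ring.
Qed.

Lemma Hblk_sum (Pi : node n -> 'M[R]_(1 + d)) (X Xk : st) :
  \sum_(a < A) Hblk D rho Pi (blockof X a) Xk =
  wnPi Pi (st_sub X Xk) / 2 + ipS (gradS (Fobj D rho) Xk) (st_sub X Xk).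
Proof. by rewrite /Hblk big_split /= -mulr_suml /wnPi /ipS !sum_node. Qed.

Lemma Hfun_blk (X Xk : st) :
  Hfun D rho drho zeta X Xk = \sum_(a < A) Hblk D rho (Pik Xk) (blockof X a) Xk + Fobj D rho Xk.
Proof. by rewrite Hfun_expand Hblk_sum. Qed.

Lemma Hblk_node (Pi : node n -> 'M[R]_(1 + d)) a (Y : blk R d n a) (Xk : st) :
  Hblk D rho Pi Y Xk = \sum_(i < n a) Hnode D rho i (Pi (nd i)) (Y i) Xk.
Proof. by rewrite /Hblk /Hnode big_split /= -mulr_suml. Qed.

Lemma rho_le_tangent s1 s2 : 0 <= s1 -> 0 <= s2 -> rho s2 <= rho s1 + drho s1 * (s2 - s1).
Proof.
move=> s1_ge0 s2_ge0; case: LK => _ [slope _] concave _ _.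
exact: concave_le_tangent concave s1_ge0 s2_ge0 (slope _ s1_ge0).
Qed.

Lemma Fe_le_Ee a b (i : 'I_(n a)) (j : 'I_(n b)) (X Xk : st) :
  SOmx (Rt D i j) -> 0 <= kap D i j -> 0 <= tau D i j ->
  Fe D rho i j X <= Ee D rho drho i j X Xk.
Proof.
move=> Rt_SO kap_ge0 tau_ge0; rewrite Ee_expand //.
set Y := st_sub X Xk; set B := qf_bil D i j Xk Y.
have qY_le_pY := qf_le_pf kap_ge0 tau_ge0 Y Rt_SO.
have qX : qf D i j X = qf D i j Xk + 2 * B + qf D i j Y by rewrite -qf_add st_subK.
have qXk_ge0 := qf_ge0 kap_ge0 tau_ge0 Xk; have qY_ge0 := qf_ge0 kap_ge0 tau_ge0 Y.
rewrite /Fe /omega; case: (a == b); first by rewrite qX; lra.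
have /andP[drho_ge0 _] : 0 <= drho (qf D i j Xk) <= 1.
  by case: LK => _ _ _ [slope _] _; apply: slope.
have := rho_le_tangent qXk_ge0 (qf_ge0 kap_ge0 tau_ge0 X); rewrite qX.
have := ler_wpM2l drho_ge0 qY_le_pY; nra.
Qed.

Lemma Gfun_le_Hfun xi (X Xk : st) : xi <= zeta ->
  Gfun D rho drho xi X Xk <= Hfun D rho drho zeta X Xk.
Proof.
move=> xi_le_zeta; rewrite /Gfun /Hfun; apply: lerD.
  apply: lerD => //; apply: ler_sum_aa => a e /Dok[Rt_SO kap_ge0 tau_ge0].
  exact: Fe_le_Ee.
have := nrm2_ge0 (st_sub X Xk); set N := nrm2 _ => N_ge0; nra.
Qed.

Lemma Fobj_le_Gfun xi (X Xk : st) : 0 <= xi -> Fobj D rho X <= Gfun D rho drho xi X Xk.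
Proof.
move=> xi_ge0; rewrite /Fobj /Gfun -[X in X <= _]addr0 lerD //.
  apply: lerD => //; apply: ler_sum_ab => a b e /Dok[Rt_SO kap_ge0 tau_ge0].
  exact: Fe_le_Ee.
by apply: mulr_ge0; [lra | exact: nrm2_ge0].
Qed.

Lemma Ee_self a b (i : 'I_(n a)) (j : 'I_(n b)) (Xk : st) :
  Ee D rho drho i j Xk Xk = Fe D rho i j Xk.
Proof. by rewrite /Ee st_subxx pf0 ipS0r mulr0 !add0r. Qed.

Lemma Hfun_self (Xk : st) : Hfun D rho drho zeta Xk Xk = Fobj D rho Xk.
Proof.
rewrite /Hfun st_subxx nrm2_0 mulr0 addr0 /Fobj.
by congr (_ + _); [apply: eq_sum_aa | apply: eq_sum_ab] => *; exact: Ee_self.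
Qed.

Lemma Gfun_self xi (Xk : st) : Gfun D rho drho xi Xk Xk = Fobj D rho Xk.
Proof.
rewrite /Gfun st_subxx nrm2_0 mulr0 addr0 /Fobj.
by congr (_ + _); apply: eq_sum_ab => *; exact: Ee_self.
Qed.

End Majorizer.

Lemma qform_row (R : realType) (J : finType) (P : J -> J -> R) (d : nat) (r0 : 'I_d)
    (g : J -> R) :
  \sum_(r < d) qform P (fun u => if r == r0 then g u else 0) = qform P g.
Proof.
rewrite (bigD1 r0) //= eqxx [X in _ + X]big1 ?addr0 // => r /negbTE rr0.
by rewrite rr0 qform0.
Qed.

Section QuadraticComparison.
Variables (R : realType) (d A : nat) (n : 'I_A -> nat) (D : pgo_data R d n).
Variables (rho drho : R -> R) (xi zeta : R).
Hypotheses (LK : loss_kernel rho drho) (Dok : data_ok D).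
Local Notation st := (state R d n).

(* Quadratic forms acting on the columns of [X] are recovered by testing a state
   supported on a single row [r0]. *)
Definition row_state (r0 : 'I_d) (z : colG d n -> R) : st :=
  fun v => \matrix_(r, c) (if r == r0 then z (v, c) else 0).

Lemma wnG_row_state P (r0 : 'I_d) z : wnG P (row_state r0 z) = qform P z.
Proof.
rewrite /wnG -(qform_row P r0 z); apply: eq_bigr => r _; congr qform.
by apply: funext => -[v c]; rewrite /row_state mxE.
Qed.

Lemma wnB_row_state a P (r0 : 'I_d) z :
  wnB P (blockof (row_state r0 z) a) = qform P (fun u => z (nd u.1, u.2)).
Proof.
rewrite /wnB -(qform_row P r0); apply: eq_bigr => r _; congr qform.
by apply: funext => -[i c]; rewrite /blockof /row_state mxE.
Qed.

Lemma wnPi_row_state (Pi : node n -> 'M[R]_(1 + d)) (r0 : 'I_d) z :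
  wnPi Pi (row_state r0 z) = qdiagN Pi z.
Proof.
apply: eq_bigr => v _; rewrite wnormM_qform -(qform_row _ r0).
by apply: eq_bigr => r _; congr qform; apply: funext => c; rewrite /row_state mxE.
Qed.

Lemma wnB_oppr a P (Y : st) : wnB P (blockof (fun w => - Y w) a) = wnB P (blockof Y a).
Proof.
rewrite /wnB; apply: eq_bigr => r _; rewrite -qformN; congr qform.
by apply: funext => u; rewrite /blockof mxE opprK.
Qed.

Lemma Gblk_sum (Gam : forall a : 'I_A, colB d n a -> colB d n a -> R) (X Xk : st) :
  \sum_(a < A) Gblk D rho (Gam a) (blockof X a) Xk =
  (\sum_(a < A) wnB (Gam a) (blockof (st_sub X Xk) a)) / 2
  + ipS (gradS (Fobj D rho) Xk) (st_sub X Xk).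
Proof. by rewrite /Gblk big_split /= -mulr_suml /ipS sum_node. Qed.

(* Polarization: the linear terms of [Gfun] cancel between [Xk + Y] and [Xk - Y]. *)
Lemma Gfun_add_sub (Xk Y : st) :
  Gfun D rho drho xi (fun w => Xk w + Y w) Xk + Gfun D rho drho xi (fun w => Xk w + - Y w) Xk
  = 2 * Fobj D rho Xk + sum_aa D (fun a i j => qf D i j Y)
    + sum_ab D (fun a b i j => omega D drho i j Xk * pf D i j Y) + xi * nrm2 Y.
Proof.
rewrite /Gfun !st_sub_addl nrm2N.
have Faa : sum_aa D (fun a i j => Fe D rho i j (fun w => Xk w + Y w))
    + sum_aa D (fun a i j => Fe D rho i j (fun w => Xk w + - Y w))
    = 2 * sum_aa D (fun a i j => Fe D rho i j Xk) + sum_aa D (fun a i j => qf D i j Y).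
  rewrite -sum_aaD sum_aaZ -sum_aaD; apply: eq_sum_aa => a e _.
  by rewrite /Fe eqxx !qf_add qf_bilN qfN; field.
have Eab : sum_ab D (fun a b i j => Ee D rho drho i j (fun w => Xk w + Y w) Xk)
    + sum_ab D (fun a b i j => Ee D rho drho i j (fun w => Xk w + - Y w) Xk)
    = 2 * sum_ab D (fun a b i j => Fe D rho i j Xk)
      + sum_ab D (fun a b i j => omega D drho i j Xk * pf D i j Y).
  rewrite -sum_abD sum_abZ -sum_abD; apply: eq_sum_ab => a b e _.
  by rewrite /Ee !st_sub_addl pfN ipSNr; field.
rewrite /Fobj; lra.
Qed.

Section BlockComparison.
Variables (Xk : st) (Gam : forall a : 'I_A, colB d n a -> colB d n a -> R).
Hypothesis Gfun_blk : forall X : st, Gfun D rho drho xi X Xk =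
  \sum_(a < A) Gblk D rho (@Gam a) (blockof X a) Xk + Fobj D rho Xk.

Lemma qdiagB_le_Pik (r0 : 'I_d) z : xi <= zeta -> qdiagB Gam z <= qdiagN (Pik D drho zeta Xk) z.
Proof.
move=> xi_le_zeta; have := Gfun_le_Hfun LK Dok (fun w => Xk w + row_state r0 z w) Xk xi_le_zeta.
rewrite Gfun_blk Hfun_expand // Gblk_sum !st_sub_addl wnPi_row_state.
under eq_bigr do rewrite wnB_row_state.
rewrite -/(qdiagB Gam z); lra.
Qed.

Lemma Mform_le_qdiagB (r0 : 'I_d) z Mk : 0 <= xi ->
  (forall Y : st, wnG Mk Y = Mform D drho Xk Y) -> qform Mk z <= qdiagB Gam z.
Proof.
move=> xi_ge0 Mk_rep; set Y := row_state r0 z.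
have Gam_rep : \sum_(a < A) wnB (@Gam a) (blockof Y a) =
    sum_aa D (fun a i j => qf D i j Y)
    + sum_ab D (fun a b i j => omega D drho i j Xk * pf D i j Y) + xi * nrm2 Y.
  have := Gfun_add_sub Xk Y; rewrite !Gfun_blk !Gblk_sum !st_sub_addl ipSNr.
  rewrite (eq_bigr _ (fun a _ => wnB_oppr (@Gam a) Y)); lra.
rewrite -(wnG_row_state Mk r0 z) Mk_rep /Mform /qdiagB.
under eq_bigr do rewrite -(wnB_row_state _ r0).
rewrite Gam_rep -addrA lerD2l -[X in X <= _]addr0 lerD //; last first.
  by apply: mulr_ge0 => //; exact: nrm2_ge0.
apply: ler_sum_ab => a b e eE; case: (Dok eE) => Rt_SO kap_ge0 tau_ge0.
rewrite ler_wpM2l ?qf_le_pf //; by case/andP: (omega_ge0_le1 LK Dok Xk eE).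
Qed.

Definition with_block a (Y : blk R d n a) : st := fun v =>
  if tag v == a then
    (if (insub (val (tagged v)) : option 'I_(n a)) is Some i then Y i else Xk v)
  else Xk v.

Lemma blockof_with_block a (Y : blk R d n a) : blockof (with_block Y) a = Y.
Proof. by apply: funext => i; rewrite /blockof /with_block /= eqxx valK. Qed.

Lemma blockof_with_block_other a (Y : blk R d n a) a' :
  a' != a -> blockof (with_block Y) a' = blockof Xk a'.
Proof. by move=> a'a; apply: funext => i; rewrite /blockof /with_block /= (negbTE a'a). Qed.

Lemma Gblk_self a P : Gblk D rho P (blockof Xk a) Xk = 0.
Proof.
rewrite /Gblk (_ : blk_sub _ _ = fun _ => 0); last first.
  by apply: funext => i; rewrite /blk_sub subrr.
rewrite /ipB big1 ?addr0; last by move=> i _; rewrite ipM0r.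
rewrite /wnB big1 ?mul0r // => r _.
rewrite (_ : (fun u : colB d n a => (0 : 'M[R]_(d, 1 + d)) r u.2) = fun=> 0) ?qform0 //.
by apply: funext => u; rewrite mxE.
Qed.

Lemma Hblk_self a Pi : Hblk D rho Pi (blockof Xk a) Xk = 0.
Proof.
rewrite /Hblk big1 ?mul0r ?add0r; last by move=> i _; rewrite subrr wnormM0l.
by rewrite /ipB big1 // => i _; rewrite /blk_sub subrr ipM0r.
Qed.

Lemma Gblk_le_Hblk a (Y : blk R d n a) : xi <= zeta ->
  Gblk D rho (@Gam a) Y Xk <= Hblk D rho (Pik D drho zeta Xk) Y Xk /\
  (Y = blockof Xk a -> Gblk D rho (@Gam a) Y Xk = Hblk D rho (Pik D drho zeta Xk) Y Xk).
Proof.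
move=> xi_le_zeta; split; last by move=> ->; rewrite Gblk_self Hblk_self.
have := Gfun_le_Hfun LK Dok (with_block Y) Xk xi_le_zeta.
rewrite Gfun_blk Hfun_blk // (bigD1 a) //= [X in _ <= X + _](bigD1 a) //=.
rewrite !big1 => [|a' a'a|a' a'a]; last 2 first.
- by rewrite blockof_with_block_other // Hblk_self.
- by rewrite blockof_with_block_other // Gblk_self.
by rewrite blockof_with_block !addr0 lerD2r.
Qed.

End BlockComparison.
End QuadraticComparison.

(* [2 <= d] only provides a row index. *)
Theorem proposition4 (R : realType) (d A : nat) (n : 'I_A -> nat)
  (D : pgo_data R d n) (rho drho : R -> R) (xi zeta : R) :
  (2 <= d)%N -> (forall a, (0 < n a)%N) -> data_ok D ->
  loss_kernel rho drho -> 0 <= xi -> xi <= zeta ->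
  exists (Pi : state R d n -> node n -> 'M[R]_(1 + d))
         (Pc : colG d n -> colG d n -> R),
    psdf Pc /\
    forall Xk : state R d n, feasible Xk ->
    [/\ (* the Pi^{alpha(k)}_i are PSD *)
        (forall v : node n, psdM (Pi Xk v)),
        (* (a) *)
        (forall X : state R d n,
           Hfun D rho drho zeta X Xk
           = \sum_(a < A) Hblk D rho (Pi Xk) (blockof X a) Xk + Fobj D rho Xk)
        /\ (forall (a : 'I_A) (Y : blk R d n a),
              Hblk D rho (Pi Xk) Y Xk
              = \sum_(i < n a) Hnode D rho i (Pi Xk (nd i)) (Y i) Xk),
        (* (b) *)
        (forall X : state R d n,
           [/\ Hfun D rho drho zeta X Xk
               = wnPi (Pi Xk) (st_sub X Xk) / 2
                 + ipS (gradS (Fobj D rho) Xk) (st_sub X Xk) + Fobj D rho Xk,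
               Gfun D rho drho xi X Xk <= Hfun D rho drho zeta X Xk
             & Fobj D rho X <= Gfun D rho drho xi X Xk])
        /\ (Hfun D rho drho zeta Xk Xk = Gfun D rho drho xi Xk Xk
            /\ Gfun D rho drho xi Xk Xk = Fobj D rho Xk),
        (* (c) and (e), for Gamma^{alpha(k)} the PSD matrices of the
           block-diagonal quadratic part of G( . | X^(k)) *)
        (forall Gam : forall a : 'I_A, colB d n a -> colB d n a -> R,
           (forall a : 'I_A, psdf (Gam a)) ->
           (forall X : state R d n,
              Gfun D rho drho xi X Xk
              = \sum_(a < A) Gblk D rho (Gam a) (blockof X a) Xk + Fobj D rho Xk) ->
           [/\ (* (c) Pi^(k) >= Gamma^(k) *)
               (forall z : colG d n -> R, qdiagB Gam z <= qdiagN (Pi Xk) z),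
               (* (c) Gamma^(k) >= M^(k) *)
               (forall Mk : colG d n -> colG d n -> R, psdf Mk ->
                  (forall Y : state R d n, wnG Mk Y = Mform D drho Xk Y) ->
                  forall z : colG d n -> R, qform Mk z <= qdiagB Gam z)
             & (* (e) *)
               (forall (a : 'I_A) (Y : blk R d n a),
                  Gblk D rho (Gam a) Y Xk <= Hblk D rho (Pi Xk) Y Xk
                  /\ (Y = blockof Xk a ->
                      Gblk D rho (Gam a) Y Xk = Hblk D rho (Pi Xk) Y Xk))])
      & (* (d) Pi >= Pi^(k), Pi independent of X^(k) *)
        (forall z : colG d n -> R, qdiagN (Pi Xk) z <= qform Pc z)].
Proof.
move=> d_ge2 _ Dok LK xi_ge0 xi_le_zeta.
have zeta_ge0 : 0 <= zeta by apply: le_trans xi_le_zeta.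
have r0 : 'I_d by exists 0%N; apply: leq_trans d_ge2.
exists (Pik D drho zeta), (Pi_bound D zeta).
split; first exact: psdf_Pi_bound.
move=> Xk _; split.
- by move=> v; apply: psdM_Pik LK Dok _ _ _.
- by split=> [X|a Y]; [exact: Hfun_blk LK Dok X Xk | exact: Hblk_node].
- split; last by rewrite (Hfun_self D rho drho zeta) (Gfun_self D rho drho xi).
  move=> X; split.
  + exact: Hfun_expand.
  + exact: (Gfun_le_Hfun LK Dok X Xk xi_le_zeta).
  + exact: (Fobj_le_Gfun LK Dok X Xk xi_ge0).
- move=> Gam _ Gfun_blk; split.
  + by move=> z; apply: (qdiagB_le_Pik LK Dok Gfun_blk r0 z xi_le_zeta).
  + by move=> Mk _ Mk_rep z; apply: (Mform_le_qdiagB LK Dok Gfun_blk r0 z xi_ge0 Mk_rep).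
  + by move=> a Y; apply: (Gblk_le_Hblk LK Dok Gfun_blk Y xi_le_zeta).
- by move=> z; rewrite qform_Pi_bound; apply: qdiagN_Pik_le_max LK Dok Xk z.
Qed.
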